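(* In $\mathbb{C}^3$ let $|l_a\rangle=(\sin\theta\cos\varphi_a,\sin\theta\sin\varphi_a,\cos\theta)$ for $a=1,\dots,5$, with $\varphi_a=4\pi a/5$ and $\cos\theta=5^{-1/4}$, so that $\langle l_a|l_{a\oplus1}\rangle=0$ (indices mod 5). Then the planes $\mathrm{span}\{|l_2\rangle,|l_3\rangle\}$ and $\mathrm{span}\{|l_4\rangle,|l_5\rangle\}$ intersect in a ray; let $|\psi_2\rangle$ be a unit vector on it, let $|\chi\rangle$ be a unit vector orthogonal to $|l_2\rangle,|l_3\rangle$ and $|\chi'\rangle$ a unit vector orthogonal to $|l_4\rangle,|l_5\rangle$. Then $|\langle l_1|\psi_2\rangle|^2=1-\frac{2}{\sqrt5}>0$, while every function $v$ from the set of rays $\{|l_1\rangle,\dots,|l_5\rangle,|\chi\rangle,|\chi'\rangle,|\psi_2\rangle\}$ to $\{0,1\}$ which assigns value 1 to exactly one member of every orthogonal triple in this set, assigns value 1 to at most one member of every orthogonal pair in this set, and satisfies $v(|\psi_2\rangle)=1$, must satisfy $v(|l_1\rangle)=0$. *)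

From HB Require Import structures.
From mathcomp Require Import all_boot all_order all_algebra.
From mathcomp Require Import complex.
From mathcomp Require Import all_classical all_reals.
From mathcomp Require Import exp trigo.
Set Implicit Arguments. Unset Strict Implicit. Unset Printing Implicit Defensive.
Import Order.TTheory GRing.Theory Num.Theory.
Local Open Scope ring_scope.
Local Open Scope complex_scope.

Section Defs.
Variable R : realType.
Notation C := (R[i]).

Definition inner (u w : 'rV[C]_3) : C := \sum_(i < 3) (u 0 i)^* * w 0 i.

Definition theta : R := acos (5 `^ (- (1 / 4))).
Definition phi (a : nat) : R := 4 * pi * a%:R / 5.

Definition lvec (a : nat) : 'rV[C]_3 :=
  \row_(i < 3) ((if i == 0 :> nat then sin theta * cos (phi a)
                 else if i == 1 :> nat then sin theta * sin (phi a)
                 else cos theta)%:C).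

(* the ray (one-dimensional subspace) spanned by u, as a canonical row space *)
Definition ray (u : 'rV[C]_3) : 'M[C]_3 := <<u>>%MS.

Definition span2 (u w : 'rV[C]_3) : 'M[C]_3 := (<<u>> + <<w>>)%MS.

Definition unit_vec (u : 'rV[C]_3) : Prop := inner u u = 1.

Definition KS_valuation (S : seq 'rV[C]_3) (v : 'M[C]_3 -> bool) : Prop :=
  (forall x y z, x \in S -> y \in S -> z \in S ->
     inner x y = 0 -> inner y z = 0 -> inner x z = 0 ->
     (v (ray x) + v (ray y) + v (ray z) = 1)%N) /\
  (forall x y, x \in S -> y \in S -> inner x y = 0 ->
     ~~ (v (ray x) && v (ray y))).

End Defs.

From HB Require Import structures.
From mathcomp Require Import all_boot all_order all_algebra.
From mathcomp Require Import complex.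
From mathcomp Require Import all_classical all_reals.
From mathcomp Require Import exp trigo.
From mathcomp Require Import ring lra.
Set Implicit Arguments.
Unset Strict Implicit.
Unset Printing Implicit Defensive.

(** Since cos theta ^2 = 1/sqrt 5 and cos (pi/5) = (1 + sqrt 5)/4, the Gram
   matrix of l_1, ..., l_5 has 1 on the diagonal, 0 between neighbours on the
   pentagon and k = (sqrt 5 - 1)/2 elsewhere.  As k^2 <> 1, l_2, l_3, l_4 are
   independent, so the two planes span C^3 and meet in a line.  Writing
   psi = a l_2 + b l_3 = c l_4 + d l_5 and pairing with l_1 and l_4 gives
   b = c = k a, whence |<l_1|psi>|^2 = k^4 / (1 + k^2) = 1 - 2/sqrt 5.
   For the valuation: psi is orthogonal to chi and chi', which therefore get 0;
   so one of l_2, l_3 and one of l_4, l_5 gets 1, and as l_3 is orthogonal to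
   l_4, one of l_2, l_5 does; both are orthogonal to l_1. *)

Import Order.TTheory GRing.Theory Num.Theory.
Local Open Scope ring_scope.
Local Open Scope complex_scope.

Section InnerProduct.
Variable R : realType.
Notation C := R[i].
Implicit Types (u w x p : 'rV[C]_3) (a b : C).

Lemma inner_addl u u' w : inner (u + u') w = inner u w + inner u' w.
Proof.
by rewrite /inner -big_split; apply: eq_bigr => i _; rewrite mxE rmorphD mulrDl.
Qed.

Lemma inner_addr u w w' : inner u (w + w') = inner u w + inner u w'.
Proof. by rewrite /inner -big_split; apply: eq_bigr => i _; rewrite mxE mulrDr. Qed.

Lemma inner_scalel a u w : inner (a *: u) w = a^* * inner u w.
Proof.
by rewrite /inner mulr_sumr; apply: eq_bigr => i _; rewrite mxE rmorphM mulrA.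
Qed.

Lemma inner_scaler a u w : inner u (a *: w) = a * inner u w.
Proof. by rewrite /inner mulr_sumr; apply: eq_bigr => i _; rewrite mxE mulrCA. Qed.

Lemma inner_conj u w : inner w u = (inner u w)^*.
Proof.
rewrite /inner rmorph_sum; apply: eq_bigr => i _.
by rewrite rmorphM /= conjcK mulrC.
Qed.

Lemma inner0r u : inner u 0 = 0.
Proof. by rewrite /inner big1 // => i _; rewrite mxE mulr0. Qed.

Lemma inner_sumr n u (f : 'I_n -> 'rV[C]_3) :
  inner u (\sum_(i < n) f i) = \sum_(i < n) inner u (f i).
Proof. exact: (big_morph (inner u) (inner_addr u) (inner0r u)). Qed.

Lemma sub_span2l u w : (u <= span2 u w)%MS.
Proof. by rewrite (submx_trans _ (addsmxSl _ _)) ?genmxE. Qed.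

Lemma sub_span2r u w : (w <= span2 u w)%MS.
Proof. by rewrite (submx_trans _ (addsmxSr _ _)) ?genmxE. Qed.

Lemma sub_span2_combination p u w :
  (p <= span2 u w)%MS -> exists a b, p = a *: u + b *: w.
Proof.
rewrite /span2 (adds_eqmx (genmxE u) (genmxE w)) => /sub_addsmxP [[a b] /= ->].
exists (a 0 0), (b 0 0).
by rewrite {1}(mx11_scalar a) {1}(mx11_scalar b) !mul_scalar_mx.
Qed.

Lemma inner_span2_orthogonal p u w x :
  (p <= span2 u w)%MS -> inner u x = 0 -> inner w x = 0 -> inner p x = 0.
Proof.
move=> /sub_span2_combination [a [b ->]] ux wx.
by rewrite inner_addl !inner_scalel ux wx !mulr0 addr0.
Qed.

Lemma inner_combination_orthonormal a b u w :
  unit_vec u -> unit_vec w -> inner u w = 0 ->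
  inner (a *: u + b *: w) (a *: u + b *: w) = `|a| ^+ 2 + `|b| ^+ 2.
Proof.
move=> uu ww uw; have wu : inner w u = 0 by rewrite inner_conj uw conjc0.
rewrite !inner_addl !inner_addr !inner_scalel !inner_scaler uu ww uw wu.
by rewrite !normCK; ring.
Qed.

Lemma mxrank_rows_gram n (f : 'I_n -> 'rV[C]_3) :
  (forall y : 'rV[C]_n,
     (forall j, \sum_(i < n) y 0 i * inner (f j) (f i) = 0) -> y = 0) ->
  \rank (\matrix_(i < n) f i) = n.
Proof.
move=> gram_free; apply/eqP; rewrite -[_ == _]/(row_free _) -kermx_eq0.
apply/eqP/row_matrixP => i; rewrite row0; apply: gram_free => j.
set y := row i _.
have /sub_kermxP yM0 : (y <= kermx (\matrix_i f i))%MS by exact: row_sub.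
transitivity (inner (f j) (\sum_k y 0 k *: f k)).
  by rewrite inner_sumr; apply: eq_bigr => k _; rewrite inner_scaler.
have -> : \sum_i y 0 i *: f i = y *m \matrix_i f i.
  by rewrite mulmx_sum_row; apply: eq_bigr => k _; rewrite rowK.
by rewrite yM0 inner0r.
Qed.

Lemma mxrank_orthonormal n (f : 'I_n -> 'rV[C]_3) :
  (forall i j, inner (f i) (f j) = (i == j)%:R) -> \rank (\matrix_(i < n) f i) = n.
Proof.
move=> fON; apply: mxrank_rows_gram => y gram_y; apply/rowP => j.
rewrite mxE -(gram_y j) (bigD1 j) //= big1 => [|i ij].
  by rewrite fON eqxx mulr1 addr0.
by rewrite fON eq_sym (negbTE ij) mulr0.
Qed.

Lemma mxrank_span2_orthonormal u w :
  unit_vec u -> unit_vec w -> inner u w = 0 -> \rank (span2 u w) = 2%N.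
Proof.
move=> uu ww uw; have wu : inner w u = 0 by rewrite inner_conj uw conjc0.
apply/eqP; rewrite eqn_leq; apply/andP; split.
  apply: leq_trans (mxrank_adds_leqif _ _) _.
  by rewrite !genmxE (leq_add (rank_leq_row _) (rank_leq_row _)).
rewrite -{1}(mxrank_orthonormal (f := fun i : 'I_2 => [:: u; w]`_i)).
  apply: mxrankS; apply/row_subP => -[[|[|//]] ?];
  by rewrite rowK /= ?sub_span2l ?sub_span2r.
by move=> [[|[|//]] ?] [[|[|//]] ?]; rewrite /= ?uu ?ww ?uw ?wu.
Qed.

End InnerProduct.

Section Pentagram.
Variable R : realType.
Local Notation C := R[i].
Local Notation sqrt5 := (Num.sqrt (5 : R)).
Local Notation l := (lvec R).
Local Notation k := ((sqrt5 - 1) / 2).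

Lemma sqrt5_sqr : sqrt5 ^+ 2 = 5.
Proof. by rewrite sqr_sqrtr. Qed.

Lemma sqrt5_gt2 : 2 < sqrt5.
Proof. have := sqrt5_sqr; have : 0 <= sqrt5 by exact: sqrtr_ge0. nra. Qed.

Lemma sqrt5_inv : sqrt5^-1 = sqrt5 / 5.
Proof.
have s5 : sqrt5 != 0 by rewrite gt_eqF //; have := sqrt5_gt2; lra.
by rewrite -{3}sqrt5_sqr expr2 invfM mulrA mulfV // mul1r.
Qed.

Lemma cos_theta_sqr : cos (theta R) ^+ 2 = sqrt5^-1.
Proof.
have q_ge0 : 0 <= (5 : R) `^ (- (1 / 4)) by exact: powR_ge0.
have q_sqr : ((5 : R) `^ (- (1 / 4))) ^+ 2 = sqrt5^-1.
  rewrite -powR_mulrn // -powRrM.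
  have -> : - (1 / 4) * 2%:R = - (2^-1 : R) by field.
  by rewrite powRN powR12_sqrt.
suff -> : cos (theta R) = (5 : R) `^ (- (1 / 4)) by [].
rewrite /theta acosK // in_itv /=.
have : sqrt5^-1 <= 1 by rewrite invr_le1 ?unitfE; have := sqrt5_gt2; lra.
rewrite -q_sqr => q_le1; apply/andP; split; nra.
Qed.

Lemma sin_theta_sqr : sin (theta R) ^+ 2 = 1 - sqrt5^-1.
Proof. by rewrite sin2cos2 cos_theta_sqr. Qed.

Lemma cos_pi_div5 : cos (pi / 5) = (1 + sqrt5) / 4 :> R.
Proof.
(* cos 3x = - cos 2x makes q = cos x a root of (q + 1)(4 q^2 - 2 q - 1). *)
set x := pi / 5; set q := cos x.
have q_gt0 : 0 < q.
  by apply: cos_gt0_pihalf; have := @pi_gt0 R; rewrite /x; lra.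
have : cos (x *+ 2 + x) = cos (pi - x *+ 2) by congr cos; rewrite /x !mulr2n; field.
rewrite cosB cosD cospi sinpi cos_mulr2n sin_mulr2n -/q => e.
have sin_sqr : sin x ^+ 2 = 1 - q ^+ 2 by rewrite sin2cos2.
have /eqP : (q + 1) * ((q - (1 + sqrt5) / 4) * (q - (1 - sqrt5) / 4)) = 0.
  by have := sqrt5_sqr; nra.
rewrite !mulf_eq0 => /or3P[/eqP|/eqP|/eqP]; try lra.
by have := sqrt5_gt2; lra.
Qed.

Lemma cos_2pi_div5 : cos (pi / 5 *+ 2) = (sqrt5 - 1) / 4 :> R.
Proof. by rewrite cos_mulr2n cos_pi_div5; have := sqrt5_sqr; lra. Qed.

Definition lvec_gram (d : nat) : R :=
  sin (theta R) ^+ 2 * cos (phi R d) + cos (theta R) ^+ 2.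

Lemma lvec_gram_cos d : lvec_gram d = (1 - sqrt5 / 5) * cos (phi R d) + sqrt5 / 5.
Proof. by rewrite /lvec_gram sin_theta_sqr cos_theta_sqr sqrt5_inv. Qed.

Lemma lvec_gram0 : lvec_gram 0 = 1.
Proof. by rewrite /lvec_gram /phi mulr0 mul0r cos0 mulr1 addrC cos2Dsin2. Qed.

Lemma lvec_gram1 : lvec_gram 1 = 0.
Proof.
rewrite lvec_gram_cos.
have -> : phi R 1 = - (pi / 5) + pi by rewrite /phi; field.
by rewrite cosDpi cosN cos_pi_div5; have := sqrt5_sqr; nra.
Qed.

Lemma lvec_gram2 : lvec_gram 2 = (sqrt5 - 1) / 2.
Proof.
rewrite lvec_gram_cos.
have -> : phi R 2 = - (pi / 5 *+ 2) + pi *+ 2 by rewrite /phi !mulr2n; field.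
by rewrite cosD2pi cosN cos_2pi_div5; have := sqrt5_sqr; nra.
Qed.

Lemma lvec_gram3 : lvec_gram 3 = (sqrt5 - 1) / 2.
Proof.
rewrite lvec_gram_cos.
have -> : phi R 3 = pi / 5 *+ 2 + pi *+ 2 by rewrite /phi !mulr2n; field.
by rewrite cosD2pi cos_2pi_div5; have := sqrt5_sqr; nra.
Qed.

Lemma lvec_gram4 : lvec_gram 4 = 0.
Proof.
rewrite lvec_gram_cos.
have -> : phi R 4 = pi / 5 + pi + pi *+ 2 by rewrite /phi !mulr2n; field.
by rewrite cosD2pi cosDpi cos_pi_div5; have := sqrt5_sqr; nra.
Qed.

Let lvec_gramE := (lvec_gram0, lvec_gram1, lvec_gram2, lvec_gram3, lvec_gram4).

Lemma inner_lvec_cos a b : inner (l a) (l b) =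
  (sin (theta R) ^+ 2 * cos (phi R a - phi R b) + cos (theta R) ^+ 2)%:C.
Proof.
have real_conj (y : R) : Num.conj y%:C = y%:C.
  by apply: conj_Creal; apply/complex_realP; exists y.
rewrite /inner !big_ord_recr big_ord0 /= !mxE /= !real_conj add0r.
by rewrite -!rmorphM -!rmorphD; congr (_%:C); rewrite cosB; ring.
Qed.

Lemma phiB a b : (b <= a)%N -> phi R (a - b) = phi R a - phi R b.
Proof. by move=> ba; rewrite /phi natrB //; field. Qed.

Lemma inner_lvec a b :
  inner (l a) (l b) = (lvec_gram (if (b <= a)%N then (a - b)%N else (b - a)%N))%:C.
Proof.
rewrite inner_lvec_cos /lvec_gram; case: leqP => [ba|/ltnW ab]; first by rewrite phiB.
by rewrite phiB // -cosN opprB.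
Qed.

Lemma lvec_unit a : unit_vec (l a).
Proof. by rewrite /unit_vec inner_lvec leqnn subnn lvec_gram0. Qed.

Lemma inner_lvec_succ a : inner (l a) (l a.+1) = 0.
Proof. by rewrite inner_lvec ltnn subSnn lvec_gram1. Qed.

Lemma lvec_cycle_orthogonal a :
  (1 <= a <= 5)%N -> inner (l a) (l (a %% 5).+1) = 0.
Proof.
case: a => [|[|[|[|[|[|a]]]]]] //= _; rewrite ?inner_lvec_succ //.
by rewrite inner_lvec /= lvec_gram4.
Qed.

Lemma mxrank_lvec_plane a : \rank (span2 (l a) (l a.+1)) = 2%N.
Proof.
exact: mxrank_span2_orthonormal (lvec_unit a) (lvec_unit a.+1) (inner_lvec_succ a).
Qed.

Lemma sqr_k_neq1 : k%:C ^+ 2 != 1 :> C.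
Proof.
by rewrite -rmorphXn fmorph_eq1; apply/eqP; have := sqrt5_sqr; have := sqrt5_gt2; nra.
Qed.

Lemma mxrank_planes_sum :
  \rank (span2 (l 2) (l 3) + span2 (l 4) (l 5))%MS = 3%N.
Proof.
apply/eqP; rewrite eqn_leq rank_leq_col /=.
rewrite -{1}(mxrank_rows_gram (f := fun i : 'I_3 => [:: l 2; l 3; l 4]`_i)).
  apply: mxrankS; apply/row_subP => -[[|[|[|//]]] ?]; rewrite rowK /=.
  - exact: submx_trans (sub_span2l _ _) (addsmxSl _ _).
  - exact: submx_trans (sub_span2r _ _) (addsmxSl _ _).
  - exact: submx_trans (sub_span2l _ _) (addsmxSr _ _).
(* The Gram matrix of l_2, l_3, l_4 is [[1, 0, k], [0, 1, 0], [k, 0, 1]]. *)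
move=> y gram_y.
have := gram_y 0; have := gram_y 1; have := gram_y ord_max.
rewrite !big_ord_recr !big_ord0 /= !inner_lvec /= !lvec_gramE ?rmorph0 ?rmorph1.
rewrite !mulr0 !mulr1 !add0r !addr0.
set y0 := y 0 (widen_ord _ (widen_ord _ _)); set y2 := y 0 ord_max.
set y1 := y 0 _; set K := _%:C => e2 e1 e0.
have y2E : y2 = - (y0 * K) by apply/eqP; rewrite -addr_eq0 addrC e2.
have /eqP : y0 * (1 - K ^+ 2) = 0 by rewrite -e0 y2E; ring.
rewrite mulf_eq0 subr_eq0 => /orP[/eqP y0E|]; last first.
  by rewrite eq_sym => /(negP sqr_k_neq1).
have y2E' : y2 = 0 by rewrite y2E y0E mul0r oppr0.
apply/rowP => -[[|[|[|//]]] Hi]; rewrite mxE; [rewrite -y0E|rewrite -e1|rewrite -y2E'];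
  by congr (y 0 _); apply/val_inj.
Qed.

Lemma mxrank_planes_cap :
  \rank (span2 (l 2) (l 3) :&: span2 (l 4) (l 5))%MS = 1%N.
Proof.
have := mxrank_sum_cap (span2 (l 2) (l 3)) (span2 (l 4) (l 5)).
rewrite mxrank_planes_sum !mxrank_lvec_plane => /eqP.
by rewrite -(addn1 3) eqn_add2l => /eqP.
Qed.

Lemma k_pow4 : k ^+ 4 = (1 - 2 / sqrt5) * (1 + k ^+ 2).
Proof.
have s2 := sqrt5_sqr.
have s3 : sqrt5 ^+ 3 = 5 * sqrt5 by rewrite exprS s2 mulrC.
have s4 : sqrt5 ^+ 4 = 25 by rewrite (exprM sqrt5 2 2) s2; lra.
rewrite sqrt5_inv; lra.
Qed.

Lemma one_sub_2_div_sqrt5_gt0 : 0 < 1 - 2 / sqrt5.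
Proof. by rewrite sqrt5_inv; have := sqrt5_sqr; have := sqrt5_gt2; nra. Qed.

Lemma sqr_norm_inner_lvec1_cap psi :
  (psi <= span2 (l 2) (l 3) :&: span2 (l 4) (l 5))%MS -> unit_vec psi ->
  `|inner (l 1) psi| ^+ 2 = (1 - 2 / sqrt5)%:C.
Proof.
rewrite sub_capmx => /andP[/sub_span2_combination[a [b psiE]]].
move=> /sub_span2_combination[c [d psiE']] psi_unit.
have K_norm : `|k%:C| = k%:C :> C by rewrite ger0_norm // lecR; have := sqrt5_gt2; lra.
have K_neq0 : k%:C != 0 :> C by rewrite fmorph_eq0 gt_eqF //; have := sqrt5_gt2; lra.
have l1b : inner (l 1) psi = b * k%:C.
  by rewrite psiE inner_addr !inner_scaler !inner_lvec /= !lvec_gramE rmorph0 mulr0 add0r.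
have l1c : inner (l 1) psi = c * k%:C.
  rewrite psiE' inner_addr !inner_scaler !inner_lvec /= !lvec_gramE.
  by rewrite rmorph0 mulr0 addr0.
have l4a : inner (l 4) psi = a * k%:C.
  by rewrite psiE inner_addr !inner_scaler !inner_lvec /= !lvec_gramE rmorph0 mulr0 addr0.
have l4c : inner (l 4) psi = c.
  rewrite psiE' inner_addr !inner_scaler !inner_lvec /= !lvec_gramE.
  by rewrite rmorph0 rmorph1 mulr0 mulr1 addr0.
have bE : b = a * k%:C by rewrite -l4a l4c; apply: (mulIf K_neq0); rewrite -l1b -l1c.
have norm_a : `|a| ^+ 2 * (1 + k ^+ 2)%:C = 1.
  rewrite -[RHS]psi_unit psiE inner_combination_orthonormal.
  - by rewrite rmorphD rmorphXn bE normrM K_norm exprMn mulrDr mulr1.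
  - exact: lvec_unit.
  - exact: lvec_unit.
  - exact: (inner_lvec_succ 2).
have K4 : k%:C ^+ 4 = ((1 - 2 / sqrt5) * (1 + k ^+ 2))%:C :> C.
  by rewrite -k_pow4 rmorphXn.
rewrite l1b bE !normrM K_norm !exprMn -mulrA -exprD -[(2 + 2)%N]/(4 : nat) K4.
by rewrite rmorphM mulrCA norm_a mulr1.
Qed.

End Pentagram.

Lemma pentagon_valuation (p x x' v1 v2 v3 v4 v5 : bool) :
  p -> ~~ (p && x) -> ~~ (p && x') ->
  (v2 + v3 + x = 1)%N -> (v4 + v5 + x' = 1)%N ->
  ~~ (v1 && v2) -> ~~ (v5 && v1) -> ~~ (v3 && v4) -> v1 = false.
Proof. by move=> -> /= /negbTE-> /negbTE->; case: v1 v2 v3 v4 v5 => [] [] [] [] []. Qed.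

Theorem mainTheorem6 (R : realType) :
  (forall a : nat, (1 <= a <= 5)%N ->
     inner (lvec R a) (lvec R (a %% 5).+1) = 0) /\
  \rank (span2 (lvec R 2) (lvec R 3) :&: span2 (lvec R 4) (lvec R 5))%MS = 1%N /\
  (forall psi2 chi chi' : 'rV[R[i]]_3,
     (psi2 <= span2 (lvec R 2) (lvec R 3) :&: span2 (lvec R 4) (lvec R 5))%MS ->
     unit_vec psi2 ->
     unit_vec chi -> inner (lvec R 2) chi = 0 -> inner (lvec R 3) chi = 0 ->
     unit_vec chi' -> inner (lvec R 4) chi' = 0 -> inner (lvec R 5) chi' = 0 ->
     `|inner (lvec R 1) psi2| ^+ 2 = (1 - 2 / Num.sqrt 5)%:C /\
     0 < 1 - 2 / Num.sqrt (5 : R) /\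
     (forall v : 'M[R[i]]_3 -> bool,
        KS_valuation [:: lvec R 1; lvec R 2; lvec R 3; lvec R 4; lvec R 5;
                         chi; chi'; psi2] v ->
        v (ray psi2) ->
        v (ray (lvec R 1)) = false)).
Proof.
split; first exact: lvec_cycle_orthogonal.
split; first exact: mxrank_planes_cap.
move=> psi chi chi' psi_cap psi_unit _ l2chi l3chi _ l4chi l5chi.
split; first exact: sqr_norm_inner_lvec1_cap.
split; first exact: one_sub_2_div_sqrt5_gt0.
move=> v [triple pair] v_psi.
move: (psi_cap); rewrite sub_capmx => /andP[psi23 psi45].
apply: (pentagon_valuation v_psi).
- by apply: pair (inner_span2_orthogonal psi23 l2chi l3chi); rewrite !inE eqxx ?orbT.
- by apply: pair (inner_span2_orthogonal psi45 l4chi l5chi); rewrite !inE eqxx ?orbT.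
- by apply: triple (inner_lvec_succ _ _) l3chi l2chi; rewrite !inE eqxx ?orbT.
- by apply: triple (inner_lvec_succ _ _) l5chi l4chi; rewrite !inE eqxx ?orbT.
- by apply: pair (inner_lvec_succ _ _); rewrite !inE eqxx ?orbT.
- by apply: pair (@lvec_cycle_orthogonal _ 5 isT); rewrite !inE eqxx ?orbT.
- by apply: pair (inner_lvec_succ _ _); rewrite !inE eqxx ?orbT.
Qed.
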